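(* Let $\Omega\subset\mathbb{R}^d$ be compact, $\mu$ a probability measure on $\Omega$, and $\Phi_N=\{\varphi_j\}_{j=1}^N\subset\mathcal{C}(\Omega)$ with $\sup_{x\in\Omega}|\varphi_j(x)|\le1$ for $1\le j\le N$. Let $r\ge0$, $A_1^r(\Phi_N):=\{\sum_{j=1}^Nc_j\varphi_j:\sum_{j=1}^N|c_j|j^r\le1\}$, and let $\mathbf{F}\subset\mathcal{C}(\Omega)$ satisfy $\operatorname{dist}(\mathbf{F},A_1^r(\Phi_N))_\infty:=\sup_{f\in\mathbf{F}}\inf_{g\in A_1^r(\Phi_N)}\sup_{x\in\Omega}|f(x)-g(x)|<\infty$. Then for any integer $v$ with $1\le v\le N/2$, any $m\in\mathbb{N}$ and any $\xi=(\xi^1,\dots,\xi^m)\in\Omega^m$, $$\sigma_{2v}(\mathbf{F},\Phi_N)_{L_2(\Omega,\mu_\xi)}\le v^{-r-\frac12}+\operatorname{dist}(\mathbf{F},A_1^r(\Phi_N))_\infty.$$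
   Context: $\mu_\xi=\frac12\mu+\frac1{2m}\sum_{j=1}^m\delta_{\xi^j}$. For $1\le w\le N$, $\Sigma_w(\Phi_N)$ is the union of all spaces $\operatorname{span}\{\varphi_j:j\in J\}$ with $J\subset\{1,\dots,N\}$, $|J|=w$; $\sigma_w(f,\Phi_N)_X=\inf_{g\in\Sigma_w(\Phi_N)}\|f-g\|_X$ and $\sigma_w(\mathbf{F},\Phi_N)_X=\sup_{f\in\mathbf{F}}\sigma_w(f,\Phi_N)_X$. *)

From HB Require Import structures.
From mathcomp Require Import all_boot all_order all_algebra.
From mathcomp Require Import all_classical all_reals all_analysis.
Set Implicit Arguments. Unset Strict Implicit. Unset Printing Implicit Defensive.
Import Order.TTheory GRing.Theory Num.Theory.
Import numFieldNormedType.Exports.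
Local Open Scope classical_set_scope.
Local Open Scope ring_scope.

Definition Rd (R : realType) (d : nat) := g_sigma_algebraType (@open 'rV[R]_d).

Section Defs.
Context {R : realType} {d : nat}.

(* mu_xi = 1/2 mu + 1/(2m) sum_{j=1}^m delta_{xi^j} *)
Definition mu_xi (mu : probability (Rd R d) R) (m : nat) (xi : 'I_m -> 'rV[R]_d) :=
  measure_add
    (mscale ((2^-1 : R)%:nng) mu)
    (mscale (((2 * m)%:R^-1 : R)%:nng)
       (msum (fun k : nat => if insub k is Some i then @dirac _ (Rd R d) (xi i) R
                             else @mzero _ (Rd R d) R) m)).

Definition L2dist (nu : {measure set (Rd R d) -> \bar R}) (Omega : set 'rV[R]_d)
  (f g : 'rV[R]_d -> R) : \bar R :=
  ((\int[nu]_(x in (Omega : set (Rd R d))) ((`|f x - g x| ^+ 2)%:E)) `^ (2^-1))%E.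

Definition supdist (Omega : set 'rV[R]_d) (f g : 'rV[R]_d -> R) : \bar R :=
  ereal_sup [set (`|f x - g x|)%:E | x in Omega].

Definition A1r (N : nat) (phi : 'I_N -> 'rV[R]_d -> R) (r : R) : set ('rV[R]_d -> R) :=
  [set g | exists c : 'I_N -> R,
     \sum_(j < N) `|c j| * (j.+1%:R `^ r) <= 1 /\
     g = (fun x => \sum_(j < N) c j * phi j x)].

Definition Sigma_w (N : nat) (phi : 'I_N -> 'rV[R]_d -> R) (w : nat) : set ('rV[R]_d -> R) :=
  [set g | exists (J : {set 'I_N}) (c : 'I_N -> R),
     #|J| = w /\ g = (fun x => \sum_(j in J) c j * phi j x)].

Definition sigma_w (nu : {measure set (Rd R d) -> \bar R}) (Omega : set 'rV[R]_d)
  (N : nat) (phi : 'I_N -> 'rV[R]_d -> R) (w : nat) (F : set ('rV[R]_d -> R)) : \bar R :=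
  ereal_sup [set ereal_inf [set L2dist nu Omega f g | g in Sigma_w phi w] | f in F].

Definition dist_inf (Omega : set 'rV[R]_d) (N : nat) (phi : 'I_N -> 'rV[R]_d -> R) (r : R)
  (F : set ('rV[R]_d -> R)) : \bar R :=
  ereal_sup [set ereal_inf [set supdist Omega f g | g in A1r phi r] | f in F].

End Defs.

(* Fix f in F and g = sum_j c_j phi_j in A_1^r(Phi_N) uniformly within delta of f
   on Omega.  The coefficients c_j with j > v have l^1 mass S <= v^-r.  Keep the
   first v terms of g and replace the tail by Maurey's empirical approximation:
   the average of v signed, rescaled dictionary elements drawn with probabilities
   |c_j| / S approximates the tail with mean squared L_2(mu_xi) error at most
   S^2 / v, because the Gram matrix of Phi_N in L_2(mu_xi) is positive
   semidefinite with diagonal at most mu_xi(Omega) <= 1.  Choosing the draws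
   greedily, one at a time, derandomises the argument.  The resulting 2v-term
   approximant is within v^(-r-1/2) + delta of f in L_2(Omega, mu_xi). *)

From HB Require Import structures.
From mathcomp Require Import all_boot all_order all_algebra.
From mathcomp Require Import all_classical all_reals all_analysis.
From mathcomp Require Import measurable_realfun.
From mathcomp Require Import ring zify.
Import Order.TTheory GRing.Theory Num.Theory.
Import numFieldNormedType.Exports.
Local Open Scope classical_set_scope.
Local Open Scope ring_scope.
Set Implicit Arguments. Unset Strict Implicit. Unset Printing Implicit Defensive.

Lemma card_ord_lt N v : (#|[set k : 'I_N | (k < v)%N]%SET| <= v)%N.
Proof.
rewrite cardE -(size_map val) -[X in (_ <= X)%N](size_iota 0).
apply: uniq_leq_size => [|x /mapP[k]]; first by rewrite (map_inj_uniq val_inj) enum_uniq.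
by rewrite mem_enum inE mem_iota => kv ->.
Qed.

Lemma exists_superset_card (T : finType) (A : {set T}) n :
  (#|A| <= n <= #|T|)%N -> exists2 J : {set T}, A \subset J & #|J| = n.
Proof.
elim: n => [|n IH] /andP[An nT]; first by exists A => //; apply/eqP; rewrite -leqn0.
move: An; rewrite leq_eqVlt ltnS => /orP[/eqP An|An]; first by exists A.
have [J AJ Jn] := IH (introT andP (conj An (ltnW nT))).
have /card_gt0P[x] : (0 < #|~: J|)%N by move: (cardsC J); rewrite Jn; lia.
rewrite inE => xJ; exists (x |: J); first by rewrite subsetU // AJ orbT.
by rewrite cardsU1 xJ Jn.
Qed.

Section QuadraticForm.
Variables (R : realFieldType) (N : nat) (G : 'M[R]_N).

Definition bform (a b : 'rV[R]_N) : R := (a *m G *m b^T) 0 0.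
Local Notation qform a := (bform a a).

Lemma bformE a b : bform a b = \sum_i \sum_j a 0 i * b 0 j * G i j.
Proof.
rewrite /bform mxE [RHS]exchange_big /=; apply: eq_bigr => j _.
by rewrite !mxE mulr_suml; apply: eq_bigr => i _; rewrite mulrAC.
Qed.

Lemma bformDl a b w : bform (a + b) w = bform a w + bform b w.
Proof. by rewrite /bform !mulmxDl mxE. Qed.

Lemma bformDr w a b : bform w (a + b) = bform w a + bform w b.
Proof. by rewrite /bform linearD mulmxDr mxE. Qed.

Lemma bformZl k a b : bform (k *: a) b = k * bform a b.
Proof. by rewrite /bform -!scalemxAl mxE. Qed.

Lemma bformZr a k b : bform a (k *: b) = k * bform a b.
Proof. by rewrite /bform linearZ /= -scalemxAr mxE. Qed.

Lemma bform_sumr (I : Type) (r : seq I) (P : pred I) a (F : I -> 'rV_N) :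
  bform a (\sum_(i <- r | P i) F i) = \sum_(i <- r | P i) bform a (F i).
Proof. by rewrite /bform linear_sum mulmx_sumr summxE. Qed.

Lemma qformZ k a : qform (k *: a) = k ^+ 2 * qform a.
Proof. by rewrite bformZl bformZr mulrA -expr2. Qed.

Lemma qformN a : qform (- a) = qform a.
Proof. by rewrite -scaleN1r qformZ sqrrN expr1n mul1r. Qed.

Lemma qform_delta j : qform 'e_j = G j j.
Proof. by rewrite /bform -rowE trmx_delta -colE !mxE. Qed.

Hypothesis G_sym : G^T = G.

Lemma bformC a b : bform a b = bform b a.
Proof.
have -> : bform a b = (a *m G *m b^T)^T 0 0 by rewrite mxE.
by rewrite !trmx_mul trmxK G_sym mulmxA.
Qed.

Lemma qformD a b : qform (a + b) = qform a + 2 * bform a b + qform b.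
Proof. by rewrite bformDl !bformDr [bform b a]bformC; ring. Qed.

Lemma qform_avg (I : finType) (p : I -> R) (Y : I -> 'rV_N) w :
  \sum_j p j = 1 -> \sum_j p j *: Y j = 0 ->
  \sum_j p j * qform (w + Y j) = qform w + \sum_j p j * qform (Y j).
Proof.
move=> p1 pY0.
under eq_bigr do rewrite qformD !mulrDr.
rewrite !big_split /= -mulr_suml p1 mul1r -addrA; congr (_ + _).
rewrite -[RHS]add0r; congr (_ + _).
rewrite (eq_bigr (fun j => 2 * bform w (p j *: Y j))); last by move=> j _; rewrite bformZr mulrCA.
by rewrite -mulr_sumr -bform_sumr pY0 /bform linear0 mulmx0 mxE mulr0.
Qed.

Lemma exists_le_avg (I : finType) (p y : I -> R) :
  (forall j, 0 <= p j) -> \sum_j p j = 1 -> exists j, y j <= \sum_j p j * y j.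
Proof.
move=> p0 p1; case: (pickP (@predT I)) => [j0 _|I0]; last first.
  by move: p1; rewrite big_pred0 // => /eqP; rewrite eq_sym oner_eq0.
have [j _ jmin] := @arg_minP _ R _ j0 predT y isT.
exists j; rewrite -[y j]mul1r -p1 mulr_suml; apply: ler_sum => i _.
by rewrite ler_wpM2l ?jmin.
Qed.

Hypothesis G_psd : forall a, 0 <= qform a.

Lemma maurey (I : finType) (p : I -> R) (X : I -> 'rV_N) c S :
  (forall j, 0 <= p j) -> \sum_j p j = 1 -> \sum_j p j *: X j = c ->
  (forall j, qform (X j) <= S ^+ 2) ->
  forall n, exists s : seq I,
    size s = n /\ qform (n%:R *: c - \sum_(j <- s) X j) <= n%:R * S ^+ 2.
Proof.
move=> p0 p1 pXc XS.
have avg0 : \sum_j p j *: (c - X j) = 0.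
  by under eq_bigr do rewrite scalerBr; rewrite sumrB -scaler_suml p1 scale1r pXc subrr.
have variance_le : \sum_j p j * qform (c - X j) <= S ^+ 2.
  have avg0' : \sum_j p j *: (X j - c) = 0.
    by under eq_bigr do rewrite -opprB scalerN; rewrite sumrN avg0 oppr0.
  have h := qform_avg c p1 avg0'.
  rewrite (eq_bigr (fun j => p j * qform (X j))) in h; last by move=> j _; rewrite addrC subrK.
  rewrite (eq_bigr (fun j => p j * qform (X j - c))); last by move=> j _; rewrite -qformN opprB.
  rewrite -(addKr (qform c) (\sum_j _)) -h addrC lerBlDr ler_wpDr //.
  rewrite -[leRHS]mul1r -p1 mulr_suml.
  by apply: ler_sum => j _; rewrite ler_wpM2l.
(* Greedy step: by [qform_avg] the [p]-average of the next error is at most the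
   current error plus [S ^+ 2], so some index does at least as well. *)
elim=> [|n [s [sz hs]]].
  by exists [::]; split=> //; rewrite big_nil scale0r subr0 mul0r /bform !mul0mx mxE.
pose e := n%:R *: c - \sum_(j <- s) X j.
have [j hj] := exists_le_avg (fun j => qform (e + (c - X j))) p0 p1.
rewrite qform_avg // in hj.
exists (j :: s); split; first by rewrite /= sz.
have -> : n.+1%:R *: c - \sum_(i <- j :: s) X i = e + (c - X j).
  by rewrite big_cons /e mulrSr scalerDl scale1r [RHS]addrACA -opprD (addrC (X j)).
by rewrite (le_trans hj) // mulrSr mulrDl mul1r lerD.
Qed.

Hypothesis G_diag : forall j, G j j <= 1.

Lemma sparse_approx_l1norm (t : 'rV_N) n : (0 < n)%N ->
  exists (s : seq 'I_N) (b : 'rV_N), [/\ (size s <= n)%N,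
    (forall k, k \notin s -> b 0 k = 0) & qform (t - b) <= (\sum_k `|t 0 k|) ^+ 2 / n%:R].
Proof.
move=> n_gt0; set S := \sum_k `|t 0 k|.
have [S0|S_neq0] := eqVneq S 0.
  exists [::], 0; split=> // [k _|]; first by rewrite mxE.
  have -> : t = 0.
    by apply/rowP => k; rewrite mxE; apply/normr0_eq0; apply: (psumr_eq0P _ S0).
  by rewrite subr0 S0 expr0n mul0r /bform !mul0mx mxE.
have S_gt0 : 0 < S by rewrite lt_def S_neq0 sumr_ge0.
pose p j : R := `|t 0 j| / S.
pose X j : 'rV_N := (Num.sg (t 0 j) * S) *: 'e_j.
have p0 j : 0 <= p j by rewrite divr_ge0 // ltW.
have p1 : \sum_j p j = 1 by rewrite -mulr_suml mulfV.
have pXt : \sum_j p j *: X j = t.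
  rewrite [RHS]row_sum_delta; apply: eq_bigr => j _; rewrite scalerA; congr (_ *: _).
  by rewrite [RHS]numEsg /p; field.
have XS j : qform (X j) <= S ^+ 2.
  have Gjj_ge0 : 0 <= G j j by rewrite -qform_delta.
  rewrite qformZ qform_delta exprMn sqr_sg mulrAC ler_piMl ?sqr_ge0 //.
  by case: (t 0 j != 0); rewrite ?mul1r ?mul0r.
have [s [sz hs]] := maurey p0 p1 pXt XS n.
have n_neq0 : n%:R != 0 :> R by rewrite pnatr_eq0 -lt0n.
exists s, (n%:R^-1 *: \sum_(j <- s) X j); split=> [|k ks|]; first by rewrite sz.
  rewrite mxE summxE big1_seq ?mulr0 // => j /andP[_ js]; rewrite !mxE.
  have /negbTE-> : k != j by apply: contraNneq ks => ->.
  by rewrite andbF mulr0.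
have -> : t - n%:R^-1 *: \sum_(j <- s) X j = n%:R^-1 *: (n%:R *: t - \sum_(j <- s) X j).
  by rewrite scalerBr scalerA mulVf ?scale1r.
rewrite qformZ [leRHS](_ : _ = n%:R^-1 ^+ 2 * (n%:R * S ^+ 2)); last by field.
by rewrite ler_wpM2l ?sqr_ge0.
Qed.

Lemma sparse_approx_tail (c : 'rV_N) v : (0 < v)%N -> (2 * v <= N)%N ->
  exists (J : {set 'I_N}) (b : 'rV_N), [/\ #|J| = (2 * v)%N,
    (forall k, k \notin J -> b 0 k = 0) &
    qform (c - b) <= (\sum_(k < N | (v <= k)%N) `|c 0 k|) ^+ 2 / v%:R].
Proof.
move=> v_gt0 vN; pose t := \row_k (if (v <= k)%N then c 0 k else 0).
have [s [b [sv bs hb]]] := sparse_approx_l1norm t v_gt0.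
pose J0 := [set k : 'I_N | (k < v)%N] :|: [set k in s].
have [J J0J Jv] : exists2 J : {set 'I_N}, J0 \subset J & #|J| = (2 * v)%N.
  apply: exists_superset_card; rewrite card_ord vN andbT.
  rewrite (leq_trans (leq_card_setU _ _).1) // mul2n -addnn leq_add //.
    exact: card_ord_lt.
  by rewrite cardsE (leq_trans (card_size _)).
exists J, (c - t + b); split=> // [k kJ|].
  have := contra (fintype.subsetP J0J k) kJ; rewrite !inE negb_or -leqNgt => /andP[vk ks].
  by rewrite !mxE vk bs // subrr add0r.
have -> : c - (c - t + b) = t - b by apply/rowP => k; rewrite !mxE; ring.
suff <- : \sum_k `|t 0 k| = \sum_(k < N | (v <= k)%N) `|c 0 k| by [].
by rewrite [RHS]big_mkcond; apply: eq_bigr => k _; rewrite mxE; case: ifP; rewrite ?normr0.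
Qed.

End QuadraticForm.

Lemma sqrD_le_weighted (R : realFieldType) (y z t : R) : 0 < t ->
  (y + z) ^+ 2 <= (1 + t) * z ^+ 2 + (1 + t^-1) * y ^+ 2.
Proof.
move=> t_gt0; rewrite -subr_ge0.
have -> : (1 + t) * z ^+ 2 + (1 + t^-1) * y ^+ 2 - (y + z) ^+ 2 = (t * z - y) ^+ 2 / t.
  by field; rewrite gt_eqF.
by rewrite divr_ge0 ?sqr_ge0 ?ltW.
Qed.

Section GramMatrix.
Context (dT : measure_display) (T : measurableType dT) (R : realType).
Variables (nu : {measure set T -> \bar R}) (D : set T).
Hypotheses (mD : measurable D) (nuD : (nu D <= 1)%E).

Lemma bounded_integrable (h : T -> R) M : measurable_fun D h ->
  (forall x, D x -> `|h x| <= M) -> nu.-integrable D (EFin \o h).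
Proof.
move=> mh hM; apply: measurable_bounded_integrable => //.
  by rewrite (le_lt_trans nuD) ?ltry.
exists M; split; first by rewrite num_real.
by move=> y My x Dx; apply: le_trans (hM x Dx) (ltW My).
Qed.

Variables (N : nat) (phi : 'I_N -> T -> R).
Hypotheses (mphi : forall j, measurable_fun D (phi j))
  (phi_le1 : forall j x, D x -> `|phi j x| <= 1).

Definition gram : 'M[R]_N :=
  \matrix_(i, j) fine (\int[nu]_(x in D) (phi i x * phi j x)%:E).

Local Notation comb a := (fun x => \sum_j a 0 j * phi j x).

Lemma measurable_comb (a : 'rV_N) : measurable_fun D (comb a).
Proof. by apply: measurable_sum => j; apply: measurable_funM. Qed.

Lemma integrable_phiM i j : nu.-integrable D (fun x => (phi i x * phi j x)%:E).
Proof.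
apply: (@bounded_integrable _ 1) => [|x Dx]; first exact: measurable_funM.
by rewrite normrM mulr_ile1 ?phi_le1.
Qed.

Lemma integral_sqr_comb (a : 'rV_N) :
  (\int[nu]_(x in D) ((comb a x) ^+ 2)%:E = (bform gram a a)%:E)%E.
Proof.
under eq_integral => x _.
  rewrite expr2 mulr_suml.
  under eq_bigr do rewrite mulr_sumr.
  rewrite pair_bigA -sumEFin /=.
  under eq_bigr do rewrite mulrACA EFinM.
  over.
rewrite integral_sum // => [|ij]; last exact/integrableZl/integrable_phiM.
rewrite bformE pair_bigA -sumEFin; apply: eq_bigr => -[i j] _ /=.
rewrite integralZl ?integrable_phiM // mxE [RHS]EFinM fineK //.
exact/(integrable_fin_num mD)/integrable_phiM.
Qed.

Lemma gram_sym : gram^T = gram.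
Proof.
by apply/matrixP => i j; rewrite !mxE; under eq_integral do rewrite mulrC.
Qed.

Lemma gram_psd a : 0 <= bform gram a a.
Proof.
rewrite -lee_fin -integral_sqr_comb integral_ge0 // => x _.
by rewrite lee_fin sqr_ge0.
Qed.

Lemma gram_diag_le1 j : gram j j <= 1.
Proof.
rewrite mxE -lee_fin fineK; last exact/(integrable_fin_num mD)/integrable_phiM.
apply: le_trans nuD; rewrite -[nu D]mul1e -integral_cst //.
apply: ge0_le_integral => //.
- by move=> x _; rewrite lee_fin -expr2 sqr_ge0.
- exact/measurable_EFinP/measurable_funM.
- move=> x Dx; rewrite lee_fin (le_trans (ler_norm _)) //.
  by rewrite normrM mulr_ile1 ?phi_le1.
Qed.

(* Minkowski's inequality is replaced by the pointwise [sqrD_le_weighted]; the weight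
   [t = dl / B] makes the bound integrate to at most [(B + dl)^2]. *)
Lemma integral_sqr_sub_le (f : T -> R) (c b : 'rV_N) (B dl : R) :
  measurable_fun D f -> 0 < B -> 0 < dl -> bform gram (c - b) (c - b) <= B ^+ 2 ->
  (forall x, D x -> `|f x - comb c x| <= dl) ->
  (\int[nu]_(x in D) ((f x - comb b x) ^+ 2)%:E <= ((B + dl) ^+ 2)%:E)%E.
Proof.
move=> mf B_gt0 dl_gt0 hQ hf.
pose t := dl / B; pose K := (1 + t^-1) * dl ^+ 2.
have t_gt0 : 0 < t by rewrite divr_gt0.
have K_ge0 : 0 <= K by rewrite mulr_ge0 ?sqr_ge0 // addr_ge0 // invr_ge0 ltW.
have pointwise x : D x -> (f x - comb b x) ^+ 2 <= (1 + t) * (comb (c - b) x) ^+ 2 + K.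
  move=> Dx; have -> : f x - comb b x = (f x - comb c x) + comb (c - b) x.
    have -> : comb (c - b) x = comb c x - comb b x.
      by rewrite -sumrB; apply: eq_bigr => j _; rewrite !mxE mulrBl.
    by rewrite addrA subrK.
  rewrite (le_trans (sqrD_le_weighted _ _ t_gt0)) // lerD2l /K ler_wpM2l //.
    by rewrite addr_ge0 // invr_ge0 ltW.
  by rewrite -real_normK ?num_real // lerXn2r ?nnegrE ?hf // ltW.
have mcomb2 : measurable_fun D (fun x => ((comb (c - b) x) ^+ 2)%:E).
  exact/measurable_EFinP/measurable_funX/measurable_comb.
apply: (@le_trans _ _ (\int[nu]_(x in D) (((1 + t)%:E * ((comb (c - b) x) ^+ 2)%:E) + K%:E))%E).
  apply: ge0_le_integral => //.
  - by move=> x _; rewrite lee_fin sqr_ge0.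
  - exact/measurable_EFinP/measurable_funX/(measurable_funB mf (measurable_comb _)).
  - apply: emeasurable_funD; last exact: measurable_cst.
    exact: emeasurable_funM (measurable_cst _) mcomb2.
rewrite ge0_integralD //; last 2 first.
- by move=> x _; rewrite mule_ge0 ?lee_fin ?sqr_ge0 // addr_ge0 // ltW.
- exact: emeasurable_funM (measurable_cst _) mcomb2.
rewrite ge0_integralZl_EFin //; last 2 first.
- by move=> x _; rewrite lee_fin sqr_ge0.
- by rewrite addr_ge0 // ltW.
rewrite integral_sqr_comb integral_cst //.
apply: (@le_trans _ _ ((1 + t) * B ^+ 2 + K)%:E).
  rewrite [leRHS]EFinD; apply: leeD; first by rewrite lee_fin ler_wpM2l // addr_ge0 // ltW.
  by rewrite -[leRHS]mule1 lee_wpmul2l ?lee_fin.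
by rewrite lee_fin /K /t le_eqVlt; apply/orP; left; apply/eqP; field; rewrite !gt_eqF.
Qed.

End GramMatrix.

Lemma tail_sqr_div_le (R : realType) N (c : 'I_N -> R) r v : 0 <= r -> (0 < v)%N ->
  \sum_(j < N) `|c j| * j.+1%:R `^ r <= 1 ->
  (\sum_(k < N | (v <= k)%N) `|c k|) ^+ 2 / v%:R <= (v%:R `^ (- r - 2^-1)) ^+ 2.
Proof.
move=> r_ge0 v_gt0 hc; set S := \sum_(k < N | _) _.
have v_pos : 0 < v%:R :> R by rewrite ltr0n.
have S_ge0 : 0 <= S by rewrite sumr_ge0.
have hS : S <= (v%:R `^ r)^-1.
  rewrite -[leRHS]mul1r ler_pdivlMr ?powR_gt0 // mulr_suml (le_trans _ hc) //.
  rewrite [leRHS](bigID (fun k : 'I_N => (v <= k)%N)) /= ler_wpDr ?sumr_ge0 //.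
  apply: ler_sum => k vk; rewrite ler_wpM2l // ge0_ler_powR ?nnegrE ?ler0n //.
  by rewrite ler_nat ltnW.
rewrite powRD; last by rewrite pnatr_eq0 -lt0n v_gt0 implybT.
rewrite !powRN powR12_sqrt ?ler0n //.
rewrite exprMn !exprVn sqr_sqrtr ?ler0n // ler_pM2r ?invr_gt0 //.
by rewrite -exprVn lerXn2r ?nnegrE ?invr_ge0 ?powR_ge0.
Qed.

Lemma Rd_measurable_open (R : realType) d (U : set 'rV[R]_d) :
  open U -> measurable (U : set (Rd R d)).
Proof. exact: sub_sigma_algebra. Qed.

Lemma Rd_measurable_compact (R : realType) d (U : set 'rV[R]_d) :
  compact U -> measurable (U : set (Rd R d)).
Proof.
move=> /compact_closed => /(_ (@norm_hausdorff _ _)) /closed_openC /Rd_measurable_open.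
by move/measurableC; rewrite setCK.
Qed.

Lemma Rd_continuous_measurable_fun (R : realType) d (D : set 'rV[R]_d) (f : 'rV[R]_d -> R) :
  measurable (D : set (Rd R d)) -> {within D, continuous f} ->
  measurable_fun (D : set (Rd R d)) f.
Proof.
move=> mD /continuousP cf; apply: (measurability _ (RGenOpens.measurableE R)).
move=> _ [_ [a [b ->] <-]].
have /open_subspaceP[V oV VD] := cf _ (@interval_open _ (BRight a) (BLeft b) isT isT).
by rewrite setIC -VD; apply: measurableI => //; exact: Rd_measurable_open.
Qed.

Lemma mu_xi_le1 (R : realType) d (mu : probability (Rd R d) R) m (xi : 'I_m -> 'rV[R]_d)
    (A : set (Rd R d)) :
  measurable A -> (0 < m)%N -> (mu_xi mu xi A <= 1)%E.
Proof.
move=> mA m_gt0; rewrite /mu_xi measure_addE /= /mscale /=.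
set dirac_sum := msum _ m A.
have hdirac : (dirac_sum <= m%:R%:E)%E.
  rewrite /dirac_sum /msum /= -[m in leRHS]card_ord -sum1_card natr_sum -sumEFin.
  by apply: lee_sum => k _; case: insub => [i|] /=; rewrite ?diracE ?lee_fin //; case: (_ \in _).
apply: le_trans (leeD (lee_wpmul2l _ (probability_le1 mu mA))
                      (lee_wpmul2l _ hdirac)) _; rewrite ?lee_fin ?invr_ge0 //.
have m_neq0 : m%:R != 0 :> R by rewrite pnatr_eq0 -lt0n.
by rewrite natrM le_eqVlt; apply/orP; left; apply/eqP; field.
Qed.

Lemma L2dist_le (R : realType) d (nu : {measure set (Rd R d) -> \bar R}) (Omega : set 'rV[R]_d)
    (f g : 'rV[R]_d -> R) e : 0 <= e ->
  (\int[nu]_(x in (Omega : set (Rd R d))) ((f x - g x) ^+ 2)%:E <= (e ^+ 2)%:E)%E ->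
  (L2dist nu Omega f g <= e%:E)%E.
Proof.
move=> e_ge0 hI; rewrite /L2dist.
rewrite (eq_integral (fun x : Rd R d => ((f x - g x) ^+ 2)%:E)); last first.
  by move=> x _; rewrite real_normK ?num_real.
set X := (\int[nu]_(x in _) _)%E in hI *.
have X_ge0 : (0 <= X)%E by rewrite integral_ge0 // => x _; rewrite lee_fin sqr_ge0.
have X_fin : X \is a fin_num by rewrite ge0_fin_numE // (le_lt_trans hI) ?ltry.
rewrite -(fineK X_fin) poweR_EFin lee_fin powR12_sqrt ?fine_ge0 //.
by rewrite -(ger0_norm e_ge0) -sqrtr_sqr ler_wsqrtr // -lee_fin fineK.
Qed.

Section SparseApproximation.
Variables (R : realType) (d : nat) (Omega : set 'rV[R]_d).
Variable nu : {measure set (Rd R d) -> \bar R}.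
Hypotheses (mO : measurable (Omega : set (Rd R d)))
  (nuO : (nu (Omega : set (Rd R d)) <= 1)%E).
Variables (N : nat) (phi : 'I_N -> 'rV[R]_d -> R).
Hypotheses (mphi : forall j, measurable_fun (Omega : set (Rd R d)) (phi j))
  (phi_le1 : forall j x, Omega x -> `|phi j x| <= 1).
Variables (r : R) (v : nat).
Hypotheses (r_ge0 : 0 <= r) (v_gt0 : (0 < v)%N) (vN : (2 * v <= N)%N).

Local Notation B := (v%:R `^ (- r - 2^-1)).

Lemma exists_sparse_L2dist_le (f : 'rV[R]_d -> R) (c : 'I_N -> R) dl :
  measurable_fun (Omega : set (Rd R d)) f -> 0 < dl ->
  \sum_(j < N) `|c j| * j.+1%:R `^ r <= 1 ->
  (forall x, Omega x -> `|f x - \sum_(j < N) c j * phi j x| <= dl) ->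
  exists2 g, Sigma_w phi (2 * v) g & (L2dist nu Omega f g <= (B + dl)%:E)%E.
Proof.
move=> mf dl_gt0 hc hf.
have [J [b [Jv bJ hb]]] := sparse_approx_tail (gram_sym nu _ phi)
  (gram_psd mO nuO mphi phi_le1) (gram_diag_le1 mO nuO mphi phi_le1) (\row_j c j) v_gt0 vN.
exists (fun x => \sum_(j in J) b 0 j * phi j x); first by exists J, (fun j => b 0 j).
have -> : (fun x => \sum_(j in J) b 0 j * phi j x) = (fun x => \sum_j b 0 j * phi j x).
  apply/funext => x; rewrite [RHS](bigID (mem J)) /= [X in _ + X]big1 ?addr0 // => j /bJ ->.
  by rewrite mul0r.
have B_gt0 : 0 < B by rewrite powR_gt0 // ltr0n.
apply: L2dist_le; first by rewrite addr_ge0 ?ltW.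
apply: (integral_sqr_sub_le mO nuO mphi phi_le1 (c := \row_j c j) mf B_gt0 dl_gt0).
  apply: le_trans hb (le_trans _ (tail_sqr_div_le r_ge0 v_gt0 hc)).
  by under eq_bigr do rewrite mxE.
by move=> x Ox; under eq_bigr do rewrite mxE; exact: hf.
Qed.

Lemma inf_L2dist_le (f : 'rV[R]_d -> R) :
  measurable_fun (Omega : set (Rd R d)) f -> Omega !=set0 ->
  (ereal_inf [set L2dist nu Omega f g | g in Sigma_w phi (2 * v)]
    <= B%:E + ereal_inf [set supdist Omega f g | g in A1r phi r])%E.
Proof.
move=> mf [x0 Ox0]; set Df := ereal_inf [set supdist Omega f g | g in A1r phi r].
have Df_ge0 : (0 <= Df)%E.
  apply: le_ereal_inf_tmp => _ [g _ <-].
  apply: (@le_trans _ _ `|f x0 - g x0|%:E); first by rewrite lee_fin.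
  by apply: ereal_sup_ubound; exists x0.
have [->|Df_ltoo] := eqVneq Df +oo%E; first by rewrite addey ?leey.
have Df_fin : Df \is a fin_num by rewrite ge0_fin_numE // lt_neqAle Df_ltoo leey.
apply/lee_addgt0Pr => e e_gt0.
have [_ [g [c [hc ->]] <-] hsup] := lb_ereal_inf_adherent e_gt0 Df_fin.
have hfg x : Omega x -> `|f x - \sum_(j < N) c j * phi j x| <= fine Df + e.
  move=> Ox; rewrite -lee_fin EFinD fineK // (le_trans _ (ltW hsup)) //.
  by apply: ereal_sup_ubound; exists x.
have [g' g'S hg'] := exists_sparse_L2dist_le mf (ltr_wpDl (fine_ge0 Df_ge0) e_gt0) hc hfg.
apply: le_trans (ereal_inf_lbound _) _; first by exists g'.
by rewrite (le_trans hg') // -(fineK Df_fin) -!EFinD addrA.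
Qed.

End SparseApproximation.

Theorem proposition3p1 (R : realType) (d : nat) (Omega : set 'rV[R]_d)
  (mu : probability (Rd R d) R) (N : nat) (phi : 'I_N -> 'rV[R]_d -> R)
  (r : R) (F : set ('rV[R]_d -> R)) (v m : nat) (xi : 'I_m -> 'rV[R]_d) :
  compact Omega ->
  mu (Omega : set (Rd R d)) = 1%E ->
  (forall j, {within Omega, continuous (phi j)}) ->
  (forall j x, Omega x -> `|phi j x| <= 1) ->
  0 <= r ->
  (forall f, F f -> {within Omega, continuous f}) ->
  (dist_inf Omega phi r F < +oo)%E ->
  (1 <= v)%N -> (2 * v <= N)%N ->
  (0 < m)%N ->
  (forall j, Omega (xi j)) ->
  (sigma_w (mu_xi mu xi) Omega phi (2 * v) F
     <= (v%:R `^ (- r - 2^-1))%:E + dist_inf Omega phi r F)%E.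
Proof.
move=> cO muO cphi phi_le1 r_ge0 cF _ v_gt0 vN m_gt0 _.
have mO := Rd_measurable_compact cO.
have Omega0 : Omega !=set0.
  by apply/set0P/eqP => O0; move: muO; rewrite O0 measure0 => /eqP; rewrite eq_sym onee_eq0.
have mphi j := Rd_continuous_measurable_fun mO (cphi j).
apply: ub_ereal_sup => _ [f Ff <-].
rewrite (le_trans (inf_L2dist_le mO (mu_xi_le1 mu xi mO m_gt0) mphi phi_le1 r_ge0 v_gt0 vN
  (Rd_continuous_measurable_fun mO (cF f Ff)) Omega0)) // leeD2l //.
by apply: ereal_sup_ubound; exists f.
Qed.
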